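(* Assume $\sigma_1(x)=\tfrac12\sigma_1''(0)(x-a_1)(x-b_1)$ and $\sigma_2(x)=\tfrac12\sigma_2''(0)(x-a_2)(x-b_2)$ with $\sigma_1''(0)\ne0$, $\sigma_2''(0)\ne0$ and real zeros satisfying $a_2<0<a_1<b_2<b_1$, and assume $q^2\Lambda_q<0$, where $\Lambda_q=q^{-2}\Big[1+\frac{(1-q^{-1})\tau'(0)}{\frac12\sigma_1''(0)}\Big]$. Put $a=b_2$ and $b=q^{-1}b_1$, and suppose $q^{-N-1}a=b$ for some $N\in\mathbb{N}_0$. Let $$\rho(x)=|x|^{\iota}\frac{(qa/x,\,x/b;q)_\infty}{(a_1/x,\,x/a_2;q)_\infty},\qquad q^{\iota}=\frac{q^{-3}\sigma_2''(0)a_2}{\sigma_1''(0)b}.$$ Then there exist polynomials $P_0,\dots,P_N$, with $P_n$ of degree $n$ a solution of the q-EHT with $\lambda=\lambda_n$, and nonzero constants $d_n^2$, such that for $m,n\in\{0,\dots,N\}$ $$\int_a^{b}P_n(x)P_m(x)\rho(x)\,d_{q^{-1}}x=d_n^2\delta_{mn},$$ i.e. the $P_n$ are orthogonal with respect to $\rho$ supported on $\{q^{-k}a\}_{k=0}^N$.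
   Context: Throughout $0<q<1$. For a function $y$ and $\zeta\in\{q,q^{-1}\}$, $D_\zeta y(x)=\frac{y(x)-y(\zeta x)}{(1-\zeta)x}$ for $x\ne0$ and $D_\zeta y(0)=y'(0)$; $[n]_q=\frac{1-q^n}{1-q}$. Let $\sigma_1$ be a real polynomial of degree at most two, $\tau(x)=\tau'(0)x+\tau(0)$ a real polynomial with $\tau'(0)\ne0$, and $\sigma_2(x):=q[\sigma_1(x)+(1-q^{-1})x\tau(x)]$. The q-EHT with parameter $n$ is $\sigma_1(x)D_{q^{-1}}D_qy(x)+\tau(x)D_qy(x)+\lambda_ny(x)=0$, $\lambda_n=-[n]_q\big(\tau'(0)+\tfrac12[n-1]_{q^{-1}}\sigma_1''(0)\big)$. $(\alpha;q)_\infty=\prod_{k\ge0}(1-\alpha q^k)$, $(\alpha_1,\dots,\alpha_r;q)_\infty=\prod_i(\alpha_i;q)_\infty$. For $q^{\iota}=c$ ($c\ne0$), $\iota$ is any complex number with $e^{\iota\ln q}=c$ and $|x|^{\iota}:=e^{\iota\ln|x|}$. For $a>0$ and $b=q^{-N-1}a$, $\int_a^{b}f(x)\,d_{q^{-1}}x=(q^{-1}-1)a\sum_{k=0}^{N}q^{-k}f(q^{-k}a)$. *)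

From Stdlib Require Import Reals ZArith.
From Coquelicot Require Import Coquelicot.
Open Scope R_scope.

Notation CC := Complex.C.

Definition qnum (z : R) (m : Z) : R := (1 - powerRZ z m) / (1 - z).

Definition Dq (zeta : R) (y : R -> R) (x : R) : R :=
  if Req_EM_T x 0 then Derive y 0
  else (y x - y (zeta * x)) / ((1 - zeta) * x).

Definition solves_qEHT (q : R) (sigma1 tau : R -> R) (lam : R) (y : R -> R) : Prop :=
  forall x : R,
    sigma1 x * Dq (/ q) (Dq q y) x + tau x * Dq q y x + lam * y x = 0.

(* lambda_n = -[n]_q (tau'(0) + 1/2 [n-1]_{q^-1} sigma1''(0)) *)
Definition lambda_n (q t1 s1 : R) (n : nat) : R :=
  - qnum q (Z.of_nat n) * (t1 + / 2 * qnum (/ q) (Z.of_nat n - 1) * s1).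

Fixpoint qpoch_fin (alpha q : R) (n : nat) : R :=
  match n with
  | O => 1
  | S m => qpoch_fin alpha q m * (1 - alpha * q ^ m)
  end.
Definition qpoch_inf (alpha q : R) : R := real (Lim_seq (qpoch_fin alpha q)).

Definition cpow_abs (x : R) (iota : CC) : CC :=
  Cmult (RtoC (exp (Re iota * ln (Rabs x))))
        (cos (Im iota * ln (Rabs x)), sin (Im iota * ln (Rabs x))).

Definition poly_eval (c : nat -> R) (n : nat) (x : R) : R :=
  sum_f_R0 (fun k => c k * x ^ k) n.
Definition has_degree (c : nat -> R) (n : nat) : Prop :=
  c n <> 0 /\ forall k, (n < k)%nat -> c k = 0.

Fixpoint csum (f : nat -> CC) (N : nat) : CC :=
  match N with
  | O => f O
  | S m => Cplus (csum f m) (f (S m))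
  end.

(* int_a^{q^{-N-1} a} f(x) d_{q^{-1}} x = (q^{-1}-1) a sum_{k=0}^N q^{-k} f(q^{-k} a) *)
Definition qint_inv (q a : R) (N : nat) (f : R -> CC) : CC :=
  Cmult (RtoC ((/ q - 1) * a))
        (csum (fun k => Cmult (RtoC (/ q ^ k)) (f (/ q ^ k * a))) N).

From Stdlib Require Import Reals ZArith Lra Lia Psatz FunctionalExtensionality.
From Coquelicot Require Import Coquelicot.
Open Scope R_scope.

(* Away from 0 the q-EHT is the three-term difference equation
   A(x) (y(qx) - y(x)) + C(x) (y(x/q) - y(x)) = - λ y(x),
   with A = σ2 / ((1-q) x)^2 and C = q^2 σ1 / ((1-q) x)^2.  It is triangular on monomials, so
   a monic solution P_n of degree n is found by back-substitution as soon as λ_0, ..., λ_n are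
   distinct, which is what Λ_q < 0 guarantees.  On the grid x_k = q^{-k} a the q-Pochhammer
   weight satisfies the Pearson relation w_k C(x_k) = w_{k+1} A(x_{k+1}), and A(x_0) = C(x_N) = 0
   because x_0 = a = b2 is a zero of σ2 and x_N = b1 is a zero of σ1; hence the operator is
   symmetric for the weighted sum over the grid and eigenfunctions with distinct eigenvalues are
   orthogonal.  The factor |x|^ι only contributes |a|^ι κ^{-k} on the grid, where q^ι = κ > 0.
   The norms are nonzero because w_k > 0 and P_n cannot vanish at N + 1 > n points. *)

Lemma pow_le_1 (x : R) (n : nat) : 0 <= x <= 1 -> x ^ n <= 1.
Proof.
  intros Hx; induction n as [|n IH]; simpl; [lra|].
  pose proof (pow_le x n ltac:(lra)). nra.
Qed.

Lemma lt_1_div (u v : R) : 0 < v -> u < v -> u / v < 1.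
Proof. intros Hv Huv. apply (Rmult_lt_reg_r v); [exact Hv|]. unfold Rdiv. rewrite Rmult_assoc, Rinv_l; lra. Qed.

Lemma exp_le_exp (x y : R) : x <= y -> exp x <= exp y.
Proof. intros [H | ->]; [left; apply exp_increasing|]; lra. Qed.

Lemma sum_f_R0_zero (f : nat -> R) (n : nat) : (forall i, (i <= n)%nat -> f i = 0) -> sum_f_R0 f n = 0.
Proof.
  intros H; induction n as [|n IH]; simpl; [apply H; lia|].
  rewrite IH; [rewrite H by lia; ring|intros i Hi; apply H; lia].
Qed.

Lemma sum_f_R0_nonneg (f : nat -> R) (N : nat) :
  (forall k, (k <= N)%nat -> 0 <= f k) -> 0 <= sum_f_R0 f N.
Proof.
  intros Hpos; induction N as [|N IH]; simpl; [apply Hpos; lia|].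
  pose proof (Hpos (S N) (le_n _)). assert (0 <= sum_f_R0 f N) by (apply IH; intros; apply Hpos; lia). lra.
Qed.

Lemma sum_f_R0_nonneg_eq_0 (f : nat -> R) (N : nat) : (forall k, (k <= N)%nat -> 0 <= f k) ->
  sum_f_R0 f N = 0 -> forall k, (k <= N)%nat -> f k = 0.
Proof.
  induction N as [|N IH]; intros Hpos Hsum k Hk; simpl in Hsum.
  - now replace k with 0%nat by lia.
  - assert (0 <= sum_f_R0 f N) by (apply sum_f_R0_nonneg; intros; apply Hpos; lia).
    pose proof (Hpos (S N) (le_n _)).
    destruct (Nat.eq_dec k (S N)) as [->|Hne]; [lra|].
    apply IH; [intros; apply Hpos; lia|lra|lia].
Qed.

(** * The q-Pochhammer symbol *)

Lemma qpoch_fin_pos (al q : R) (n : nat) : 0 < q < 1 -> al < 1 -> 0 < qpoch_fin al q n.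
Proof.
  intros Hq Hal; induction n as [|n IH]; simpl; [lra|].
  pose proof (pow_le q n ltac:(lra)). pose proof (pow_le_1 q n ltac:(lra)).
  apply Rmult_lt_0_compat; [exact IH|].
  destruct (Rle_lt_dec al 0); nra.
Qed.

Lemma qpoch_fin_le_exp (al q : R) (n : nat) : 0 < q < 1 -> al <= 0 ->
  qpoch_fin al q n <= exp (- al * (1 - q ^ n) / (1 - q)).
Proof.
  intros Hq Hal; induction n as [|n IH]; simpl.
  - replace (- al * (1 - 1) / (1 - q)) with 0 by (field; lra). rewrite exp_0; lra.
  - replace (- al * (1 - q * q ^ n) / (1 - q))
      with (- al * (1 - q ^ n) / (1 - q) + - al * q ^ n) by (field; lra).
    rewrite exp_plus.
    pose proof (pow_le q n ltac:(lra)). pose proof (exp_ineq1_le (- al * q ^ n)).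
    pose proof (qpoch_fin_pos al q n Hq ltac:(lra)).
    apply Rmult_le_compat; nra.
Qed.

(* From [exp u >= 1 + u] with [u = y / (1 - al)] and [(1 + u) (1 - y) >= 1]. *)
Lemma exp_le_one_sub (al y : R) : 0 <= y <= al -> al < 1 -> exp (- (y / (1 - al))) <= 1 - y.
Proof.
  intros Hy Hal.
  set (u := y / (1 - al)).
  assert (Hu : 0 <= u) by (apply Rdiv_le_0_compat; lra).
  assert (Hprod : 1 <= (1 + u) * (1 - y)).
  { unfold u. apply (Rmult_le_reg_l (1 - al)); [lra|].
    replace ((1 - al) * ((1 + y / (1 - al)) * (1 - y))) with ((1 - y) * (1 - al + y)) by (field; lra).
    nra. }
  pose proof (exp_ineq1_le u). pose proof (exp_pos u).
  rewrite exp_Ropp. apply (Rmult_le_reg_l (exp u)); [lra|].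
  rewrite Rinv_r by lra. nra.
Qed.

Lemma exp_le_qpoch_fin (al q : R) (n : nat) : 0 < q < 1 -> 0 <= al < 1 ->
  exp (- al * (1 - q ^ n) / ((1 - q) * (1 - al))) <= qpoch_fin al q n.
Proof.
  intros Hq Hal; induction n as [|n IH]; simpl.
  - replace (- al * (1 - 1) / ((1 - q) * (1 - al))) with 0 by (field; lra). rewrite exp_0; lra.
  - replace (- al * (1 - q * q ^ n) / ((1 - q) * (1 - al)))
      with (- al * (1 - q ^ n) / ((1 - q) * (1 - al)) + - (al * q ^ n / (1 - al))) by (field; lra).
    rewrite exp_plus.
    pose proof (pow_le q n ltac:(lra)). pose proof (pow_le_1 q n ltac:(lra)).
    apply Rmult_le_compat; try (left; apply exp_pos); [exact IH|].
    apply exp_le_one_sub; [split|]; nra.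
Qed.

Lemma qpoch_fin_cvg (al q : R) : 0 < q < 1 -> al < 1 ->
  exists l, 0 < l /\ is_lim_seq (qpoch_fin al q) l.
Proof.
  intros Hq Hal.
  pose proof (fun n => pow_le q n ltac:(lra)) as Hqn0.
  pose proof (fun n => pow_le_1 q n ltac:(lra)) as Hqn1.
  pose proof (fun n => qpoch_fin_pos al q n Hq Hal) as Hpos.
  destruct (Rle_lt_dec al 0) as [Hneg|Hgt].
  - assert (Hincr : forall n, qpoch_fin al q n <= qpoch_fin al q (S n)).
    { intro n; simpl. specialize (Hpos n).
      assert (0 <= - al * q ^ n) by (apply Rmult_le_pos; [lra|apply Hqn0]). nra. }
    assert (Hbnd : forall n, qpoch_fin al q n <= exp (- al / (1 - q))).
    { intro n. eapply Rle_trans; [apply qpoch_fin_le_exp; [exact Hq|lra]|].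
      apply exp_le_exp. unfold Rdiv. apply Rmult_le_compat_r.
      - left; apply Rinv_0_lt_compat; lra.
      - specialize (Hqn0 n). nra. }
    destruct (ex_finite_lim_seq_incr _ _ Hincr Hbnd) as [l Hl].
    exists l; split; [|exact Hl].
    assert (H1 : Rbar_le 1 l).
    { apply (is_lim_seq_le (fun _ => 1) (qpoch_fin al q)); [|apply is_lim_seq_const|exact Hl].
      induction n as [|n IH]; simpl; [lra|]. eapply Rle_trans; [apply IH|apply Hincr]. }
    simpl in H1; lra.
  - set (m := exp (- al / ((1 - q) * (1 - al)))).
    assert (Hdecr : forall n, qpoch_fin al q (S n) <= qpoch_fin al q n).
    { intro n; simpl. specialize (Hpos n).
      assert (0 <= al * q ^ n) by (apply Rmult_le_pos; [lra|apply Hqn0]). nra. }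
    assert (Hbnd : forall n, m <= qpoch_fin al q n).
    { intro n. eapply Rle_trans; [|apply exp_le_qpoch_fin; [exact Hq|lra]].
      apply exp_le_exp. unfold Rdiv. apply Rmult_le_compat_r.
      - left; apply Rinv_0_lt_compat; nra.
      - specialize (Hqn0 n). nra. }
    destruct (ex_finite_lim_seq_decr _ _ Hdecr Hbnd) as [l Hl].
    exists l; split; [|exact Hl].
    assert (H1 : Rbar_le m l).
    { apply (is_lim_seq_le (fun _ => m) (qpoch_fin al q)); [exact Hbnd|apply is_lim_seq_const|exact Hl]. }
    simpl in H1. pose proof (exp_pos (- al / ((1 - q) * (1 - al)))). unfold m in H1. lra.
Qed.

Lemma qpoch_inf_pos (al q : R) : 0 < q < 1 -> al < 1 -> 0 < qpoch_inf al q.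
Proof.
  intros Hq Hal. destruct (qpoch_fin_cvg al q Hq Hal) as [l [Hl Hlim]].
  unfold qpoch_inf. rewrite (is_lim_seq_unique _ _ Hlim). exact Hl.
Qed.

Lemma qpoch_inf_shift (al q : R) : 0 < q < 1 -> al < 1 ->
  qpoch_inf al q = (1 - al) * qpoch_inf (al * q) q.
Proof.
  intros Hq Hal.
  assert (Halq : al * q < 1) by (destruct (Rle_lt_dec al 0); nra).
  destruct (qpoch_fin_cvg (al * q) q Hq Halq) as [l [_ Hlim]].
  assert (Hshift : forall n, qpoch_fin al q (S n) = (1 - al) * qpoch_fin (al * q) q n).
  { induction n as [|n IH]; simpl in *; [ring|]. rewrite IH. ring. }
  assert (Hlim' : is_lim_seq (qpoch_fin al q) ((1 - al) * l)).
  { apply is_lim_seq_incr_1.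
    apply (is_lim_seq_ext (fun n => (1 - al) * qpoch_fin (al * q) q n)); [intro n; now rewrite Hshift|].
    now apply (is_lim_seq_scal_l _ (1 - al) l). }
  unfold qpoch_inf. now rewrite (is_lim_seq_unique _ _ Hlim'), (is_lim_seq_unique _ _ Hlim).
Qed.

(** * Polynomials *)

Lemma poly_eval_S (c : nat -> R) (n : nat) (x : R) :
  poly_eval c (S n) x = poly_eval c n x + c (S n) * x ^ S n.
Proof. reflexivity. Qed.

Lemma poly_eval_at_0 (c : nat -> R) (n : nat) : poly_eval c n 0 = c 0%nat.
Proof. induction n as [|n IH]; [unfold poly_eval; simpl; ring|]. rewrite poly_eval_S, IH; simpl; ring. Qed.

Lemma poly_eval_ext (c d : nat -> R) (n : nat) (x : R) :
  (forall k, (k <= n)%nat -> c k = d k) -> poly_eval c n x = poly_eval d n x.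
Proof.
  intros H; induction n as [|n IH]; [unfold poly_eval; simpl; rewrite H by lia; ring|].
  rewrite !poly_eval_S, IH by (intros; apply H; lia). now rewrite (H (S n)).
Qed.

Lemma poly_eval_trailing_zeros (c : nat -> R) (n m : nat) (x : R) :
  (forall k, (n < k)%nat -> c k = 0) -> (n <= m)%nat -> poly_eval c m x = poly_eval c n x.
Proof.
  intros Hc Hm; induction Hm as [|m Hm IH]; [reflexivity|].
  rewrite poly_eval_S, IH, Hc by lia. ring.
Qed.

Lemma poly_eval_plus_scal (c d : nat -> R) (r : R) (n : nat) (x : R) :
  poly_eval (fun k => c k + r * d k) n x = poly_eval c n x + r * poly_eval d n x.
Proof. induction n as [|n IH]; [unfold poly_eval; simpl; ring|]. rewrite !poly_eval_S, IH; ring. Qed.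

Lemma poly_eval_horner (c : nat -> R) (n : nat) (x : R) :
  poly_eval c (S n) x = c 0%nat + x * poly_eval (fun k => c (S k)) n x.
Proof.
  induction n as [|n IH]; [unfold poly_eval; simpl; ring|].
  rewrite poly_eval_S, IH, poly_eval_S; simpl; ring.
Qed.

Lemma poly_eval_factor (n : nat) : forall (c : nat -> R) (r : R), exists d : nat -> R,
  d n = c (S n) /\ forall x, poly_eval c (S n) x - poly_eval c (S n) r = (x - r) * poly_eval d n x.
Proof.
  induction n as [|n IH]; intros c r.
  - exists (fun _ => c 1%nat). split; [reflexivity|]. intro x. unfold poly_eval; simpl; ring.
  - destruct (IH (fun k => c (S k)) r) as [d [Hdn Hd]].
    set (d0 := fun k => if Nat.leb k n then d k else 0).
    assert (Hd0 : forall y, poly_eval d0 (S n) y = poly_eval d n y).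
    { intro y. unfold d0. rewrite poly_eval_S, (proj2 (Nat.leb_gt (S n) n)) by lia.
      rewrite (poly_eval_ext _ d); [ring|]. intros k Hk. now destruct (Nat.leb_spec k n); [|lia]. }
    exists (fun k => c (S k) + r * d0 k). split.
    + unfold d0. rewrite (proj2 (Nat.leb_gt (S n) n)) by lia. ring.
    + intro x. rewrite !(poly_eval_horner c (S n)), poly_eval_plus_scal, Hd0.
      specialize (Hd x).
      set (Ex := poly_eval (fun k => c (S k)) (S n) x) in *.
      set (Er := poly_eval (fun k => c (S k)) (S n) r) in *.
      replace (c 0%nat + x * Ex - (c 0%nat + r * Er)) with ((x - r) * Ex + r * (Ex - Er)) by ring.
      rewrite Hd. ring.
Qed.

Lemma poly_eval_roots_lead_0 (n : nat) : forall (c : nat -> R) (pts : nat -> R),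
  (forall i j, (i <= n)%nat -> (j <= n)%nat -> i <> j -> pts i <> pts j) ->
  (forall i, (i <= n)%nat -> poly_eval c n (pts i) = 0) -> c n = 0.
Proof.
  induction n as [|n IH]; intros c pts Hinj Hroot.
  - specialize (Hroot 0%nat (le_n 0)). unfold poly_eval in Hroot; simpl in Hroot. lra.
  - destruct (poly_eval_factor n c (pts (S n))) as [d [Hdn Hdiv]].
    rewrite <- Hdn. apply (IH d pts); [intros i j Hi Hj; apply Hinj; lia|].
    intros i Hi. specialize (Hdiv (pts i)). rewrite (Hroot i), (Hroot (S n)) in Hdiv by lia.
    assert (pts i - pts (S n) <> 0) by (apply Rminus_eq_contra, Hinj; lia).
    apply (Rmult_eq_reg_l (pts i - pts (S n))); [lra|auto].
Qed.

Definition qdiff_coef (z : R) (c : nat -> R) (k : nat) : R := c (S k) * ((1 - z ^ S k) / (1 - z)).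

Lemma poly_eval_sub_scale (z : R) (c : nat -> R) (n : nat) (x : R) : z <> 1 ->
  poly_eval c (S n) x - poly_eval c (S n) (z * x) = (1 - z) * x * poly_eval (qdiff_coef z c) n x.
Proof.
  intros Hz. induction n as [|n IH].
  - unfold poly_eval, qdiff_coef; simpl. field. lra.
  - rewrite (poly_eval_S c (S n)), (poly_eval_S c (S n) (z * x)), (poly_eval_S (qdiff_coef z c) n).
    replace (poly_eval c (S n) x + c (S (S n)) * x ^ S (S n)
             - (poly_eval c (S n) (z * x) + c (S (S n)) * (z * x) ^ S (S n)))
      with ((poly_eval c (S n) x - poly_eval c (S n) (z * x))
            + c (S (S n)) * (x ^ S (S n) - (z * x) ^ S (S n))) by ring.
    rewrite IH. unfold qdiff_coef. rewrite Rpow_mult_distr. simpl. field. lra.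
Qed.

Lemma poly_eval_derive_0 (c : nat -> R) (n : nat) : is_derive (poly_eval c (S n)) 0 (c 1%nat).
Proof.
  induction n as [|n IH].
  - unfold poly_eval; simpl. auto_derive; [exact I|ring].
  - apply (is_derive_ext (fun x => poly_eval c (S n) x + c (S (S n)) * x ^ S (S n)));
      [intro t; reflexivity|].
    replace (c 1%nat) with (plus (c 1%nat) 0) by (unfold plus; simpl; ring).
    apply (is_derive_plus (poly_eval c (S n)) (fun x => c (S (S n)) * x ^ S (S n))); [exact IH|].
    auto_derive; [exact I|]. simpl; ring.
Qed.

Lemma Dq_poly_eval (z : R) (c : nat -> R) (n : nat) : z <> 1 ->
  Dq z (poly_eval c (S n)) = poly_eval (qdiff_coef z c) n.
Proof.
  intros Hz. apply functional_extensionality; intro x. unfold Dq.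
  destruct (Req_EM_T x 0) as [->|Hx].
  - rewrite (is_derive_unique _ _ _ (poly_eval_derive_0 c n)), poly_eval_at_0.
    unfold qdiff_coef; simpl. field. lra.
  - rewrite poly_eval_sub_scale by exact Hz. field. split; [exact Hx|lra].
Qed.

(** * Polynomial solutions of the q-EHT *)

Definition sigma_quad (s a b x : R) : R := s / 2 * (x - a) * (x - b).
Definition tau_aff (t1 t0 x : R) : R := t1 * x + t0.
Definition sigma2_of (q : R) (sigma tau : R -> R) (x : R) : R :=
  q * (sigma x + (1 - / q) * x * tau x).

Definition coefA (q : R) (sigma tau : R -> R) (x : R) : R := sigma2_of q sigma tau x / ((1 - q) ^ 2 * x ^ 2).
Definition coefC (q : R) (sigma : R -> R) (x : R) : R := q ^ 2 * sigma x / ((1 - q) ^ 2 * x ^ 2).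

Definition qEHT_op (q : R) (sigma tau y : R -> R) (x : R) : R :=
  coefA q sigma tau x * (y (q * x) - y x) + coefC q sigma x * (y (/ q * x) - y x).

Lemma qEHT_op_eq (q : R) (sigma tau y : R -> R) (x : R) : 0 < q < 1 -> x <> 0 ->
  sigma x * Dq (/ q) (Dq q y) x + tau x * Dq q y x = qEHT_op q sigma tau y x.
Proof.
  intros Hq Hx. unfold Dq.
  destruct (Req_EM_T x 0) as [H|_]; [contradiction|].
  destruct (Req_EM_T (/ q * x) 0) as [H|_].
  { exfalso. apply Rmult_integral in H as [H|H]; [|contradiction].
    exact (Rinv_neq_0_compat q ltac:(lra) H). }
  replace (q * (/ q * x)) with x by (field; lra).
  unfold qEHT_op, coefA, coefC, sigma2_of. field. repeat split; lra || assumption.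
Qed.

Lemma qnum_nat (q : R) (k : nat) : qnum q (Z.of_nat k) = (1 - q ^ k) / (1 - q).
Proof. unfold qnum. now rewrite <- pow_powerRZ. Qed.

Lemma qnum_inv_pred (q : R) (k : nat) : 0 < q ->
  qnum (/ q) (Z.of_nat k - 1) = (1 - q / q ^ k) / (1 - / q).
Proof.
  intros Hq. unfold qnum. f_equal. f_equal. destruct k as [|k].
  - simpl. field. lra.
  - replace (Z.of_nat (S k) - 1)%Z with (Z.of_nat k) by lia.
    rewrite <- pow_powerRZ, pow_inv. simpl. field. split; [apply pow_nonzero|]; lra.
Qed.

Definition rec_beta (q s1 a1 b1 t0 : R) (k : nat) : R :=
  qnum q (Z.of_nat k) * (t0 - qnum (/ q) (Z.of_nat k - 1) * (s1 / 2) * (a1 + b1)).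
Definition rec_gamma (q s1 a1 b1 : R) (k : nat) : R :=
  qnum q (Z.of_nat k) * qnum (/ q) (Z.of_nat k - 1) * (s1 / 2) * (a1 * b1).

Lemma qEHT_monomial (q s1 a1 b1 t1 t0 : R) (n k : nat) (x : R) : 0 < q < 1 -> x <> 0 ->
  x ^ 2 * (qEHT_op q (sigma_quad s1 a1 b1) (tau_aff t1 t0) (fun t => t ^ k) x + lambda_n q t1 s1 n * x ^ k)
  = (lambda_n q t1 s1 n - lambda_n q t1 s1 k) * x ^ k * x ^ 2
    + rec_beta q s1 a1 b1 t0 k * x ^ k * x + rec_gamma q s1 a1 b1 k * x ^ k.
Proof.
  intros Hq Hx.
  unfold lambda_n, rec_beta, rec_gamma. rewrite !qnum_inv_pred, !qnum_nat by lra.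
  unfold qEHT_op. rewrite !Rpow_mult_distr, pow_inv.
  assert (q ^ k <> 0) by (apply pow_nonzero; lra).
  assert (q ^ n <> 0) by (apply pow_nonzero; lra).
  unfold coefA, coefC, sigma2_of, sigma_quad, tau_aff. field. repeat split; lra || assumption.
Qed.

Definition three_term_rec (Ln : R) (L Bt G c : nat -> R) (i : nat) : R :=
  c i * (Ln - L i) + c (S i) * Bt (S i) + c (S (S i)) * G (S (S i)).

Lemma sum_three_term_reindex (c L Bt G : nat -> R) (Ln x : R) (M : nat) :
  Bt 0%nat = 0 -> G 0%nat = 0 -> G 1%nat = 0 ->
  sum_f_R0 (fun k => c k * ((Ln - L k) * x ^ k * x ^ 2 + Bt k * x ^ k * x + G k * x ^ k)) M
  = sum_f_R0 (fun i => three_term_rec Ln L Bt G c i * x ^ i * x ^ 2) M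
    - c (S M) * Bt (S M) * x ^ S M * x - c (S M) * G (S M) * x ^ S M
    - c (S (S M)) * G (S (S M)) * x ^ S M * x.
Proof.
  intros HB0 HG0 HG1. unfold three_term_rec. induction M as [|M IH].
  - simpl. rewrite HB0, HG0, HG1. ring.
  - rewrite !tech5, IH. simpl. ring.
Qed.

Lemma qEHT_op_poly_eval (q : R) (sigma tau : R -> R) (lam : R) (c : nat -> R) (n : nat) (x : R) :
  qEHT_op q sigma tau (poly_eval c n) x + lam * poly_eval c n x
  = sum_f_R0 (fun k => c k * (qEHT_op q sigma tau (fun t => t ^ k) x + lam * x ^ k)) n.
Proof.
  unfold qEHT_op. induction n as [|n IH].
  - unfold poly_eval; simpl; ring.
  - rewrite !poly_eval_S, tech5, <- IH. ring.
Qed.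

Lemma rec_beta_0 (q s1 a1 b1 t0 : R) : rec_beta q s1 a1 b1 t0 0 = 0.
Proof. unfold rec_beta. rewrite qnum_nat. simpl. unfold Rdiv. ring. Qed.

Lemma rec_gamma_0 (q s1 a1 b1 : R) : rec_gamma q s1 a1 b1 0 = 0.
Proof. unfold rec_gamma. rewrite qnum_nat. simpl. unfold Rdiv. ring. Qed.

Lemma rec_gamma_1 (q s1 a1 b1 : R) : 0 < q < 1 -> rec_gamma q s1 a1 b1 1 = 0.
Proof. intros Hq. unfold rec_gamma. rewrite qnum_inv_pred by lra. simpl. field. lra. Qed.

Section PolynomialSolutions.

Variables (q s1 a1 b1 t1 t0 : R).
Hypothesis Hq : 0 < q < 1.

Local Notation sigma1 := (sigma_quad s1 a1 b1).
Local Notation tau := (tau_aff t1 t0).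
Local Notation lam := (lambda_n q t1 s1).
Local Notation beta := (rec_beta q s1 a1 b1 t0).
Local Notation gamma := (rec_gamma q s1 a1 b1).

Lemma qEHT_poly_eval_nonzero (n : nat) (c : nat -> R) (x : R) : x <> 0 ->
  (forall k, (n < k)%nat -> c k = 0) ->
  (forall i, (i <= n)%nat -> three_term_rec (lam n) lam beta gamma c i = 0) ->
  sigma1 x * Dq (/ q) (Dq q (poly_eval c n)) x + tau x * Dq q (poly_eval c n) x
  + lam n * poly_eval c n x = 0.
Proof.
  intros Hx Hc Hrec. rewrite qEHT_op_eq by assumption.
  apply (Rmult_eq_reg_l (x ^ 2)); [|apply pow_nonzero; exact Hx].
  rewrite Rmult_0_r, qEHT_op_poly_eval, scal_sum.
  rewrite (sum_eq _ (fun k => c k * ((lam n - lam k) * x ^ k * x ^ 2 + beta k * x ^ k * x + gamma k * x ^ k)))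
    by (intros k _; rewrite <- (qEHT_monomial q s1 a1 b1 t1 t0 n k x) by assumption; ring).
  rewrite sum_three_term_reindex, sum_f_R0_zero, (Hc (S n)), (Hc (S (S n))); try lia.
  - ring.
  - intros i Hi. rewrite Hrec by exact Hi. ring.
  - apply rec_beta_0.
  - apply rec_gamma_0.
  - now apply rec_gamma_1.
Qed.

(* At [x = 0], where [Dq] is the derivative, the equation is the [i = 0] recurrence. *)
Lemma qEHT_poly_eval_at_0 (n : nat) (c : nat -> R) :
  (forall k, (n < k)%nat -> c k = 0) -> three_term_rec (lam n) lam beta gamma c 0 = 0 ->
  sigma1 0 * Dq (/ q) (Dq q (poly_eval c n)) 0 + tau 0 * Dq q (poly_eval c n) 0
  + lam n * poly_eval c n 0 = 0.
Proof.
  intros Hc Hrec0.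
  assert (Hqinv : / q <> 1) by (intro E; apply (f_equal Rinv) in E; rewrite Rinv_inv, Rinv_1 in E; lra).
  assert (Ep : poly_eval c n = poly_eval c (S n)).
  { apply functional_extensionality; intro t. symmetry. now apply poly_eval_trailing_zeros; [|lia]. }
  assert (EDq : Dq q (poly_eval c n) = poly_eval (qdiff_coef q c) (S n)).
  { rewrite Ep, Dq_poly_eval by lra. apply functional_extensionality; intro t.
    symmetry. apply poly_eval_trailing_zeros; [|lia].
    intros k Hk. unfold qdiff_coef. rewrite (Hc (S k)) by lia. ring. }
  rewrite EDq, Dq_poly_eval, !poly_eval_at_0 by exact Hqinv.
  etransitivity; [|exact Hrec0]. unfold three_term_rec, qdiff_coef, lambda_n, rec_beta, rec_gamma, sigma_quad, tau_aff.
  rewrite !qnum_inv_pred, !qnum_nat by lra.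
  assert (q ^ n <> 0) by (apply pow_nonzero; lra).
  simpl. field. repeat split; lra.
Qed.

Lemma poly_solves_qEHT (n : nat) (c : nat -> R) :
  (forall k, (n < k)%nat -> c k = 0) ->
  (forall i, (i < n)%nat -> three_term_rec (lam n) lam beta gamma c i = 0) ->
  solves_qEHT q sigma1 tau (lam n) (poly_eval c n).
Proof.
  intros Hc Hrec.
  assert (Hrec' : forall i, (i <= n)%nat -> three_term_rec (lam n) lam beta gamma c i = 0).
  { intros i Hi. destruct (Nat.eq_dec i n) as [->|Hne]; [|apply Hrec; lia].
    unfold three_term_rec. rewrite (Hc (S n)), (Hc (S (S n))) by lia. ring. }
  intro x. destruct (Req_EM_T x 0) as [->|Hx].
  - apply qEHT_poly_eval_at_0; [exact Hc|apply Hrec'; lia].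
  - now apply qEHT_poly_eval_nonzero.
Qed.

End PolynomialSolutions.

(* [backsolve n Ln L Bt G j] is the pair [(c (n - j), c (n - j + 1))] of the solution of the
   recurrence normalised by [c n = 1]. *)
Fixpoint backsolve (n : nat) (Ln : R) (L Bt G : nat -> R) (j : nat) : R * R :=
  match j with
  | O => (1, 0)
  | S j' => let p := backsolve n Ln L Bt G j' in
      (- (fst p * Bt (S (n - S j')) + snd p * G (S (S (n - S j')))) / (Ln - L (n - S j')%nat), fst p)
  end.

Definition backsolve_coef (n : nat) (Ln : R) (L Bt G : nat -> R) (i : nat) : R :=
  if Nat.leb i n then fst (backsolve n Ln L Bt G (n - i)) else 0.

Lemma backsolve_coef_spec (n : nat) (Ln : R) (L Bt G : nat -> R) :
  (forall i, (i < n)%nat -> Ln - L i <> 0) ->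
  let c := backsolve_coef n Ln L Bt G in
  c n = 1 /\ (forall k, (n < k)%nat -> c k = 0) /\
  (forall i, (i < n)%nat -> three_term_rec Ln L Bt G c i = 0).
Proof.
  intros Hne c. split; [|split].
  - unfold c, backsolve_coef. now rewrite Nat.leb_refl, Nat.sub_diag.
  - intros k Hk. unfold c, backsolve_coef. now destruct (Nat.leb_spec k n); [lia|].
  - intros i Hi. unfold three_term_rec, c, backsolve_coef.
    destruct (Nat.leb_spec i n), (Nat.leb_spec (S i) n); try lia.
    replace (n - i)%nat with (S (n - S i)) by lia. simpl backsolve.
    replace (n - S (n - S i))%nat with i by lia.
    destruct (Nat.leb_spec (S (S i)) n).
    + replace (n - S i)%nat with (S (n - S (S i))) by lia. simpl. field. split; apply Hne; lia.
    + replace (n - S i)%nat with 0%nat by lia. simpl. field. now apply Hne.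
Qed.

Lemma pow_lt_1_injective (q : R) (n m : nat) : 0 < q < 1 -> n <> m -> q ^ n <> q ^ m.
Proof.
  intros Hq Hnm.
  assert (Hdecr : forall i j, (i < j)%nat -> q ^ j < q ^ i).
  { intros i j Hij. replace j with (i + (j - i))%nat by lia. rewrite pow_add.
    pose proof (pow_lt_1_compat q (j - i) ltac:(lra) ltac:(lia)).
    pose proof (pow_lt q i ltac:(lra)). nra. }
  destruct (Nat.lt_gt_cases n m) as [[Hl|Hl] _]; [exact Hnm| |];
    [specialize (Hdecr n m Hl)|specialize (Hdecr m n Hl)]; lra.
Qed.

(* With [u = q^n], [v = q^m] and [r = t1 / (s1/2)], [(λ_n - λ_m) (1 - q) u v] factors as
   [(u - v) (s1/2) (q^2/(1-q) + u v (r - q/(1-q)))], whose last factor is positive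
   exactly when [Λ_q < 0]. *)
Lemma lambda_n_injective (q t1 s1 : R) (n m : nat) : 0 < q < 1 -> s1 <> 0 ->
  1 + (1 - / q) * t1 / (s1 / 2) < 0 -> n <> m -> lambda_n q t1 s1 n <> lambda_n q t1 s1 m.
Proof.
  intros Hq Hs1 HL Hnm.
  pose proof (pow_lt_1_injective q n m Hq Hnm) as Huv.
  set (r := t1 / (s1 / 2)).
  assert (Ht1 : t1 = r * (s1 / 2)) by (unfold r; field; exact Hs1).
  assert (Hr : 0 < r - q / (1 - q)).
  { replace (1 + (1 - / q) * t1 / (s1 / 2)) with (1 + (1 - / q) * r) in HL by (unfold r, Rdiv; ring).
    apply (Rmult_lt_reg_l (1 - q)); [lra|].
    replace ((1 - q) * (r - q / (1 - q))) with (- q * (1 + (1 - / q) * r)) by (field; lra).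
    nra. }
  unfold lambda_n. rewrite !qnum_inv_pred, !qnum_nat by lra.
  pose proof (pow_lt q n ltac:(lra)). pose proof (pow_lt q m ltac:(lra)).
  set (u := q ^ n) in *. set (v := q ^ m) in *.
  intro E.
  assert (Hfac : (u - v) * (s1 / 2) * (q ^ 2 / (1 - q) + u * v * (r - q / (1 - q))) = 0).
  { transitivity ((- ((1 - u) / (1 - q)) * (t1 + / 2 * ((1 - q / u) / (1 - / q)) * s1)
      - - ((1 - v) / (1 - q)) * (t1 + / 2 * ((1 - q / v) / (1 - / q)) * s1)) * (1 - q) * u * v).
    - rewrite Ht1. field. repeat split; lra.
    - rewrite E. ring. }
  assert (0 < q ^ 2 / (1 - q)) by (apply Rdiv_lt_0_compat; nra).
  assert (0 < u * v * (r - q / (1 - q))) by (apply Rmult_lt_0_compat; [nra|lra]).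
  apply Rmult_integral in Hfac as [Hfac|Hfac]; [|lra].
  apply Rmult_integral in Hfac as [Hfac|Hfac]; lra.
Qed.

Definition qEHT_poly (q s1 a1 b1 t1 t0 : R) (n : nat) : nat -> R :=
  backsolve_coef n (lambda_n q t1 s1 n) (lambda_n q t1 s1) (rec_beta q s1 a1 b1 t0) (rec_gamma q s1 a1 b1).

Lemma qEHT_poly_spec (q s1 a1 b1 t1 t0 : R) (n : nat) : 0 < q < 1 -> s1 <> 0 ->
  1 + (1 - / q) * t1 / (s1 / 2) < 0 ->
  let c := qEHT_poly q s1 a1 b1 t1 t0 n in
  c n = 1 /\ (forall k, (n < k)%nat -> c k = 0) /\
  solves_qEHT q (sigma_quad s1 a1 b1) (tau_aff t1 t0) (lambda_n q t1 s1 n) (poly_eval c n).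
Proof.
  intros Hq Hs1 HL c.
  destruct (backsolve_coef_spec n (lambda_n q t1 s1 n) (lambda_n q t1 s1)
              (rec_beta q s1 a1 b1 t0) (rec_gamma q s1 a1 b1)) as [Hn [Hhigh Hrec]].
  { intros i Hi. apply Rminus_eq_contra, lambda_n_injective; [exact Hq|exact Hs1|exact HL|lia]. }
  split; [exact Hn|split; [exact Hhigh|]].
  now apply poly_solves_qEHT.
Qed.

(** * Orthogonality *)

(* Discrete Green identity on the grid [x_k = q^{-k} x_0]: the boundary terms vanish because
   [A_0 = 0] and [C_N = 0], and the interior ones cancel by the Pearson relation
   [W_k C_k = W_{k+1} A_{k+1}]. *)
Lemma three_term_orthogonality (q : R) (xs : nat -> R) (f g : R -> R) (W A C : nat -> R)
    (N : nat) (lf lg : R) :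
  q <> 0 -> (forall k, xs (S k) = / q * xs k) ->
  (forall k, (k <= N)%nat ->
     A k * (f (q * xs k) - f (xs k)) + C k * (f (/ q * xs k) - f (xs k)) = - lf * f (xs k)) ->
  (forall k, (k <= N)%nat ->
     A k * (g (q * xs k) - g (xs k)) + C k * (g (/ q * xs k) - g (xs k)) = - lg * g (xs k)) ->
  A 0%nat = 0 -> C N = 0 ->
  (forall k, (k < N)%nat -> W k * C k = W (S k) * A (S k)) ->
  (lg - lf) * sum_f_R0 (fun k => W k * f (xs k) * g (xs k)) N = 0.
Proof.
  intros Hq Hup Hf Hg HA0 HCN Hpearson.
  assert (Hdn : forall k, q * xs (S k) = xs k) by (intro k; rewrite Hup; field; exact Hq).
  set (Lf := fun k => A k * (f (q * xs k) - f (xs k)) + C k * (f (/ q * xs k) - f (xs k))).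
  set (Lg := fun k => A k * (g (q * xs k) - g (xs k)) + C k * (g (/ q * xs k) - g (xs k))).
  assert (Htel : forall M, (M <= N)%nat ->
    sum_f_R0 (fun k => W k * (Lf k * g (xs k) - f (xs k) * Lg k)) M
    = W M * C M * (f (xs (S M)) * g (xs M) - f (xs M) * g (xs (S M)))).
  { induction M as [|M IH]; intros HM.
    - simpl. unfold Lf, Lg. rewrite HA0, Hup. ring.
    - rewrite tech5, IH by lia. unfold Lf, Lg.
      rewrite (Hdn M), <- !Hup.
      apply Rminus_diag_uniq.
      transitivity ((W M * C M - W (S M) * A (S M))
                    * (f (xs (S M)) * g (xs M) - f (xs M) * g (xs (S M)))); [ring|].
      rewrite Hpearson by lia. ring. }
  rewrite scal_sum, <- (sum_eq (fun k => W k * (Lf k * g (xs k) - f (xs k) * Lg k))).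
  - rewrite Htel, HCN by lia. ring.
  - intros k Hk. unfold Lf, Lg. rewrite Hf, Hg by exact Hk. ring.
Qed.

Lemma cpow_abs_neq_0 (x : R) (iota : CC) : cpow_abs x iota <> 0%C.
Proof.
  intros E. unfold cpow_abs, Cmult, RtoC in E; simpl in E. injection E as E1 E2.
  set (e := exp (Re iota * ln (Rabs x))) in *. set (th := Im iota * ln (Rabs x)) in *.
  assert (He : 0 < e) by apply exp_pos.
  assert (cos th = 0) by nra. assert (sin th = 0) by nra.
  pose proof (sin2_cos2 th) as P. unfold Rsqr in P. nra.
Qed.

(* [q^ι = κ > 0] forces [Im ι ln q] to be a multiple of [2π], so [|x/q|^ι = |x|^ι / κ]. *)
Lemma cpow_abs_Rinv_mul (q x kap : R) (iota : CC) : 0 < q -> 0 < x -> 0 < kap ->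
  cpow_abs q iota = RtoC kap -> cpow_abs (/ q * x) iota = Cmult (cpow_abs x iota) (RtoC (/ kap)).
Proof.
  intros Hq Hx Hk H. destruct iota as [ir ii].
  unfold cpow_abs, Cmult, RtoC, Re, Im in *; simpl in *.
  rewrite Rabs_pos_eq in H by lra. injection H as H1 H2.
  set (E := exp (ir * ln q)) in *. set (th := ii * ln q) in *.
  assert (HE : 0 < E) by apply exp_pos.
  assert (Hs : sin th = 0) by nra.
  assert (Hc : cos th = 1).
  { pose proof (sin2_cos2 th) as P. unfold Rsqr in P. rewrite Hs in P.
    assert (0 < cos th) by nra. nra. }
  assert (HEk : E = kap) by (rewrite Hc in H1; lra).
  rewrite !Rabs_pos_eq by (try apply Rmult_le_pos; try left; try apply Rinv_0_lt_compat; lra).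
  rewrite ln_mult, ln_Rinv by (try apply Rinv_0_lt_compat; lra).
  replace (ii * (- ln q + ln x)) with (ii * ln x - th) by (unfold th; ring).
  replace (ir * (- ln q + ln x)) with (ir * ln x + - (ir * ln q)) by ring.
  rewrite exp_plus, exp_Ropp. fold E. rewrite cos_minus, sin_minus, Hs, Hc, HEk.
  f_equal; field; lra.
Qed.

Lemma csum_ext (f g : nat -> CC) (N : nat) :
  (forall k, (k <= N)%nat -> f k = g k) -> csum f N = csum g N.
Proof.
  intros H; induction N as [|N IH]; simpl; [apply H; lia|].
  rewrite IH; [rewrite H by lia; reflexivity|intros k Hk; apply H; lia].
Qed.

Lemma csum_scal_RtoC (z : CC) (h : nat -> R) (N : nat) :
  csum (fun k => Cmult z (RtoC (h k))) N = Cmult z (RtoC (sum_f_R0 h N)).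
Proof.
  induction N as [|N IH]; simpl; [reflexivity|].
  rewrite IH. destruct z as [u v]. unfold Cmult, Cplus, RtoC; simpl. f_equal; ring.
Qed.

Definition qweight (q a b a1 a2 x : R) : R :=
  qpoch_inf (q * a / x) q * qpoch_inf (x / b) q / (qpoch_inf (a1 / x) q * qpoch_inf (x / a2) q).

Lemma qweight_pos (q a b a1 a2 x : R) : 0 < q < 1 -> a2 < 0 -> 0 < a1 -> 0 < a ->
  a1 < x -> a <= x -> x < b -> 0 < qweight q a b a1 a2 x.
Proof.
  intros Hq Ha2 Ha1 Ha Hx1 Hxa Hxb.
  assert (/ a2 < 0) by (apply Rinv_lt_0_compat; lra).
  unfold qweight. apply Rdiv_lt_0_compat; apply Rmult_lt_0_compat; apply qpoch_inf_pos; try exact Hq.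
  - apply lt_1_div; nra.
  - apply lt_1_div; lra.
  - apply lt_1_div; lra.
  - unfold Rdiv. nra.
Qed.

(* Each of the four q-Pochhammer factors changes by one linear factor under [x -> q x]. *)
Lemma qweight_pearson (q a b a1 a2 s1 s2 kap x : R) :
  0 < q < 1 -> s1 <> 0 -> s2 <> 0 -> a2 < 0 -> 0 < a1 -> 0 < a -> 0 < b ->
  kap = / q ^ 3 * s2 * a2 / (s1 * b) ->
  a < x -> x < b -> a1 < q * x ->
  qweight q a b a1 a2 (q * x) * sigma_quad s1 a1 (q * b) (q * x)
  = / q * / kap * qweight q a b a1 a2 x * sigma_quad s2 a2 a x.
Proof.
  intros Hq Hs1 Hs2 Ha2 Ha1 Ha Hb Hk Hax Hxb Hqx.
  assert (Hx : 0 < x) by lra.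
  assert (/ a2 < 0) by (apply Rinv_lt_0_compat; lra).
  assert (Hxa2 : x / a2 < 1) by (unfold Rdiv; nra).
  assert (E1 : qpoch_inf (q * a / (q * x)) q = (1 - a / x) * qpoch_inf (q * a / x) q).
  { replace (q * a / (q * x)) with (a / x) by (field; lra).
    rewrite (qpoch_inf_shift (a / x)) by (auto using lt_1_div). f_equal. f_equal. field. lra. }
  assert (E2 : qpoch_inf (x / b) q = (1 - x / b) * qpoch_inf (q * x / b) q).
  { rewrite (qpoch_inf_shift (x / b)) by (auto using lt_1_div). f_equal. f_equal. field. lra. }
  assert (E3 : qpoch_inf (a1 / (q * x)) q = (1 - a1 / (q * x)) * qpoch_inf (a1 / x) q).
  { rewrite (qpoch_inf_shift (a1 / (q * x))) by (try apply lt_1_div; nra).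
    f_equal. f_equal. field. lra. }
  assert (E4 : qpoch_inf (x / a2) q = (1 - x / a2) * qpoch_inf (q * x / a2) q).
  { rewrite (qpoch_inf_shift (x / a2)) by auto. f_equal. f_equal. field. lra. }
  unfold qweight. rewrite E1, E2, E3, E4.
  assert (0 < qpoch_inf (q * a / x) q) by (apply qpoch_inf_pos; [exact Hq|apply lt_1_div; nra]).
  assert (0 < qpoch_inf (q * x / b) q) by (apply qpoch_inf_pos; [exact Hq|apply lt_1_div; nra]).
  assert (0 < qpoch_inf (a1 / x) q) by (apply qpoch_inf_pos; [exact Hq|apply lt_1_div; nra]).
  assert (0 < qpoch_inf (q * x / a2) q) by (apply qpoch_inf_pos; [exact Hq|unfold Rdiv; nra]).
  assert (1 - a1 / (q * x) <> 0) by (pose proof (lt_1_div a1 (q * x)); nra).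
  rewrite Hk. unfold sigma_quad. field. repeat split; lra.
Qed.

Lemma sigma2_of_quad_lead (q s1 a1 b1 t1 t0 s2 a2 b2 : R) : q <> 0 -> s1 <> 0 ->
  (forall x, sigma2_of q (sigma_quad s1 a1 b1) (tau_aff t1 t0) x = sigma_quad s2 a2 b2 x) ->
  s2 = q * s1 * (1 + (1 - / q) * t1 / (s1 / 2)).
Proof.
  intros Hq Hs1 Hsig2.
  pose proof (Hsig2 0) as H0. pose proof (Hsig2 1) as H1. pose proof (Hsig2 (-1)) as H2.
  unfold sigma2_of, sigma_quad, tau_aff in H0, H1, H2.
  transitivity (sigma_quad s2 a2 b2 1 + sigma_quad s2 a2 b2 (-1) - 2 * sigma_quad s2 a2 b2 0).
  - unfold sigma_quad. field.
  - unfold sigma_quad. rewrite <- H0, <- H1, <- H2. field. split; assumption.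
Qed.

Section Orthogonality.

Variables (q s1 a1 b1 t1 t0 s2 a2 b2 : R) (N : nat) (iota : CC).
Hypothesis Hq : 0 < q < 1.
Hypothesis Hs1 : s1 <> 0.
Hypothesis Hs2 : s2 <> 0.
Hypothesis Hsigma2 :
  forall x, sigma2_of q (sigma_quad s1 a1 b1) (tau_aff t1 t0) x = sigma_quad s2 a2 b2 x.
Hypothesis Ha2 : a2 < 0.
Hypothesis Ha1 : 0 < a1.
Hypothesis Ha1b2 : a1 < b2.
Hypothesis Hb2b1 : b2 < b1.
Hypothesis HLambda : 1 + (1 - / q) * t1 / (s1 / 2) < 0.
Hypothesis HN : / q ^ (N + 1) * b2 = / q * b1.

Local Notation b := (/ q * b1).
Local Notation sigma1 := (sigma_quad s1 a1 b1).
Local Notation tau := (tau_aff t1 t0).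
Local Notation P := (qEHT_poly q s1 a1 b1 t1 t0).

Definition kappa : R := / q ^ 3 * s2 * a2 / (s1 * b).

Hypothesis Hiota : cpow_abs q iota = RtoC kappa.

Definition grid (k : nat) : R := / q ^ k * b2.

Definition grid_weight (k : nat) : R := / q ^ k * (/ kappa) ^ k * qweight q b2 b a1 a2 (grid k).

Lemma kappa_pos : 0 < kappa.
Proof.
  pose proof (sigma2_of_quad_lead q s1 a1 b1 t1 t0 s2 a2 b2 ltac:(lra) Hs1 Hsigma2) as Hs2e.
  unfold kappa. rewrite Hs2e.
  replace (/ q ^ 3 * (q * s1 * (1 + (1 - / q) * t1 / (s1 / 2))) * a2 / (s1 * (/ q * b1)))
    with ((1 + (1 - / q) * t1 / (s1 / 2)) * a2 / (q * b1)) by (field; repeat split; lra).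
  apply Rdiv_lt_0_compat; nra.
Qed.

Lemma grid_S (k : nat) : grid (S k) = / q * grid k.
Proof. unfold grid. simpl. rewrite Rinv_mult. ring. Qed.

Lemma grid_lt (i j : nat) : (i < j)%nat -> grid i < grid j.
Proof.
  intros Hij. unfold grid. apply Rmult_lt_compat_r; [lra|].
  apply Rinv_lt_contravar; [apply Rmult_lt_0_compat; apply pow_lt; lra|].
  replace j with (i + (j - i))%nat by lia. rewrite pow_add.
  pose proof (pow_lt_1_compat q (j - i) ltac:(lra) ltac:(lia)). pose proof (pow_lt q i ltac:(lra)). nra.
Qed.

Lemma grid_pos (k : nat) : 0 < grid k.
Proof. unfold grid. apply Rmult_lt_0_compat; [apply Rinv_0_lt_compat, pow_lt|]; lra. Qed.

Lemma grid_0 : grid 0 = b2.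
Proof. unfold grid. simpl. lra. Qed.

Lemma grid_N : grid N = b1.
Proof.
  apply (Rmult_eq_reg_l (/ q)); [|apply Rinv_neq_0_compat; lra].
  rewrite <- grid_S, <- HN, Nat.add_1_r. reflexivity.
Qed.

Lemma grid_bounds (k : nat) : (k <= N)%nat -> b2 <= grid k <= b1.
Proof.
  intros Hk. rewrite <- grid_0, <- grid_N.
  split; destruct (Nat.eq_dec k 0), (Nat.eq_dec k N); subst; try lra; left; apply grid_lt; lia.
Qed.

Lemma b1_lt_b : b1 < b.
Proof. apply (Rmult_lt_reg_l q); [lra|]. rewrite <- Rmult_assoc, Rinv_r, Rmult_1_l by lra. nra. Qed.

Lemma grid_weight_pos (k : nat) : (k <= N)%nat -> 0 < grid_weight k.
Proof.
  intros Hk. pose proof (grid_bounds k Hk). pose proof kappa_pos.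
  unfold grid_weight. apply Rmult_lt_0_compat; [apply Rmult_lt_0_compat|].
  - apply Rinv_0_lt_compat, pow_lt; lra.
  - apply pow_lt, Rinv_0_lt_compat; lra.
  - pose proof b1_lt_b. apply qweight_pos; lra.
Qed.

Lemma grid_weight_pearson (k : nat) : (k < N)%nat ->
  grid_weight k * coefC q sigma1 (grid k) = grid_weight (S k) * coefA q sigma1 tau (grid (S k)).
Proof.
  intros Hk.
  pose proof (grid_bounds (S k) Hk). pose proof (grid_bounds k ltac:(lia)).
  pose proof (grid_lt k (S k) (Nat.lt_succ_diag_r k)). pose proof kappa_pos. pose proof b1_lt_b.
  set (x := grid (S k)) in *.
  assert (Hdn : grid k = q * x) by (unfold x; rewrite grid_S; field; lra).
  unfold grid_weight, coefC, coefA. fold x. rewrite Hsigma2, Hdn.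
  replace (sigma_quad s1 a1 b1 (q * x)) with (sigma_quad s1 a1 (q * b) (q * x))
    by (f_equal; field; lra).
  transitivity (/ q ^ k * (/ kappa) ^ k / ((1 - q) ^ 2 * x ^ 2)
                * (qweight q b2 b a1 a2 (q * x) * sigma_quad s1 a1 (q * b) (q * x))).
  { simpl. field. repeat split; try lra. apply pow_nonzero; lra. }
  rewrite (qweight_pearson q b2 b a1 a2 s1 s2 kappa x); try (reflexivity || lra).
  simpl. field. repeat split; try lra. apply pow_nonzero; lra.
Qed.

Lemma cpow_abs_grid (k : nat) :
  cpow_abs (grid k) iota = Cmult (cpow_abs b2 iota) (RtoC ((/ kappa) ^ k)).
Proof.
  pose proof kappa_pos.
  induction k as [|k IH].
  - rewrite grid_0. destruct (cpow_abs b2 iota) as [u v]. unfold Cmult, RtoC; simpl. f_equal; ring.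
  - pose proof (grid_pos k).
    rewrite grid_S, (cpow_abs_Rinv_mul q (grid k) kappa iota), IH by (lra || exact Hiota).
    destruct (cpow_abs b2 iota) as [u v]. unfold Cmult, RtoC; simpl. f_equal; ring.
Qed.

Lemma qint_inv_grid (p : R -> R) :
  qint_inv q b2 N (fun x => Cmult (RtoC (p x)) (Cmult (cpow_abs x iota) (RtoC (qweight q b2 b a1 a2 x))))
  = Cmult (RtoC ((/ q - 1) * b2))
      (Cmult (cpow_abs b2 iota) (RtoC (sum_f_R0 (fun k => grid_weight k * p (grid k)) N))).
Proof.
  unfold qint_inv. f_equal. rewrite <- csum_scal_RtoC. apply csum_ext. intros k Hk.
  change (/ q ^ k * b2) with (grid k). rewrite cpow_abs_grid. unfold grid_weight.
  destruct (cpow_abs b2 iota) as [u v]. unfold Cmult, RtoC; simpl. f_equal; ring.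
Qed.

Lemma qEHT_op_grid (n k : nat) : (n <= N)%nat ->
  qEHT_op q sigma1 tau (poly_eval (P n) n) (grid k) = - lambda_n q t1 s1 n * poly_eval (P n) n (grid k).
Proof.
  intros Hn. destruct (qEHT_poly_spec q s1 a1 b1 t1 t0 n Hq Hs1 HLambda) as [_ [_ Hsol]].
  pose proof (grid_pos k). rewrite <- qEHT_op_eq by lra.
  specialize (Hsol (grid k)). lra.
Qed.

Lemma grid_weight_orthogonal (m n : nat) : (m <= N)%nat -> (n <= N)%nat -> m <> n ->
  sum_f_R0 (fun k => grid_weight k * (poly_eval (P n) n (grid k) * poly_eval (P m) m (grid k))) N = 0.
Proof.
  intros Hm Hn Hmn.
  assert (HA0 : coefA q sigma1 tau (grid 0) = 0).
  { unfold coefA. rewrite Hsigma2, grid_0. unfold sigma_quad, Rdiv. ring. }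
  assert (HCN : coefC q sigma1 (grid N) = 0).
  { unfold coefC. rewrite grid_N. unfold sigma_quad, Rdiv. ring. }
  pose proof (three_term_orthogonality q grid (poly_eval (P n) n) (poly_eval (P m) m) grid_weight
    (fun k => coefA q sigma1 tau (grid k)) (fun k => coefC q sigma1 (grid k)) N
    (lambda_n q t1 s1 n) (lambda_n q t1 s1 m) ltac:(lra) grid_S
    (fun k _ => qEHT_op_grid n k Hn) (fun k _ => qEHT_op_grid m k Hm) HA0 HCN grid_weight_pearson) as Hgreen.
  apply Rmult_integral in Hgreen as [Hlam|Hsum].
  - exfalso. apply (lambda_n_injective q t1 s1 m n Hq Hs1 HLambda Hmn). lra.
  - rewrite <- Hsum. apply sum_eq. intros k _. ring.
Qed.

Lemma grid_weight_norm_neq_0 (n : nat) : (n <= N)%nat ->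
  sum_f_R0 (fun k => grid_weight k * (poly_eval (P n) n (grid k) * poly_eval (P n) n (grid k))) N <> 0.
Proof.
  intros Hn Hsum.
  destruct (qEHT_poly_spec q s1 a1 b1 t1 t0 n Hq Hs1 HLambda) as [Hlead _].
  assert (Hroots : forall k, (k <= N)%nat -> poly_eval (P n) n (grid k) = 0).
  { intros k Hk. pose proof (grid_weight_pos k Hk).
    pose proof (sum_f_R0_nonneg_eq_0 _ N
      (fun k Hk => Rmult_le_pos _ _ (Rlt_le _ _ (grid_weight_pos k Hk)) (Rle_0_sqr _)) Hsum k Hk) as H0.
    apply Rmult_integral in H0 as [H0|H0]; [lra|]. now apply Rmult_integral in H0 as [H0|H0]. }
  assert (P n n = 0); [|lra].
  apply (poly_eval_roots_lead_0 n (P n) grid); [|intros i Hi; apply Hroots; lia].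
  intros i j _ _ Hij E. destruct (Nat.lt_gt_cases i j) as [[Hl|Hl] _]; [exact Hij| |];
    [pose proof (grid_lt i j Hl)|pose proof (grid_lt j i Hl)]; lra.
Qed.

Lemma qEHT_orthogonal_family : exists (Pf : nat -> nat -> R) (d : nat -> CC),
  (forall n, (n <= N)%nat ->
     has_degree (Pf n) n /\ solves_qEHT q sigma1 tau (lambda_n q t1 s1 n) (poly_eval (Pf n) n)) /\
  (forall n, (n <= N)%nat -> d n <> RtoC 0) /\
  (forall m n, (m <= N)%nat -> (n <= N)%nat ->
     qint_inv q b2 N (fun x => Cmult (RtoC (poly_eval (Pf n) n x * poly_eval (Pf m) m x))
                                     (Cmult (cpow_abs x iota) (RtoC (qweight q b2 b a1 a2 x))))
     = if Nat.eqb m n then d n else RtoC 0).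
Proof.
  exists P, (fun n => Cmult (RtoC ((/ q - 1) * b2)) (Cmult (cpow_abs b2 iota)
    (RtoC (sum_f_R0 (fun k => grid_weight k * (poly_eval (P n) n (grid k) * poly_eval (P n) n (grid k))) N)))).
  split; [|split].
  - intros n _. destruct (qEHT_poly_spec q s1 a1 b1 t1 t0 n Hq Hs1 HLambda) as [Hlead [Hhigh Hsol]].
    split; [split; [lra|exact Hhigh]|exact Hsol].
  - intros n Hn. assert (Hiq : 1 < / q) by (rewrite <- Rinv_1; apply Rinv_lt_contravar; lra).
    apply Cmult_neq_0; [|apply Cmult_neq_0; [apply cpow_abs_neq_0|]]; intro E; injection E as E.
    + nra.
    + exact (grid_weight_norm_neq_0 n Hn E).
  - intros m n Hm Hn. rewrite qint_inv_grid.
    destruct (Nat.eqb_spec m n) as [->|Hmn]; [reflexivity|].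
    rewrite grid_weight_orthogonal by assumption.
    destruct (cpow_abs b2 iota) as [u v]. unfold Cmult, RtoC; simpl. f_equal; ring.
Qed.

End Orthogonality.

Theorem theorem4p8 (q s1 a1 b1 t1 t0 s2 a2 b2 : R) (N : nat) (iota : CC) :
  0 < q < 1 ->
  s1 <> 0 ->
  t1 <> 0 ->
  let sigma1 := fun x : R => s1 / 2 * (x - a1) * (x - b1) in
  let tau := fun x : R => t1 * x + t0 in
  let sigma2 := fun x : R => q * (sigma1 x + (1 - / q) * x * tau x) in
  (forall x : R, sigma2 x = s2 / 2 * (x - a2) * (x - b2)) ->
  s2 <> 0 ->
  a2 < 0 < a1 -> a1 < b2 < b1 ->
  let Lambda := / q ^ 2 * (1 + (1 - / q) * t1 / (s1 / 2)) in
  q ^ 2 * Lambda < 0 ->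
  let a := b2 in
  let b := / q * b1 in
  / q ^ (N + 1) * a = b ->
  cpow_abs q iota = RtoC (/ q ^ 3 * s2 * a2 / (s1 * b)) ->
  let rho := fun x : R =>
    Cmult (cpow_abs x iota)
      (RtoC (qpoch_inf (q * a / x) q * qpoch_inf (x / b) q
             / (qpoch_inf (a1 / x) q * qpoch_inf (x / a2) q))) in
  exists (P : nat -> nat -> R) (d : nat -> CC),
    (forall n : nat, (n <= N)%nat ->
       has_degree (P n) n /\
       solves_qEHT q sigma1 tau (lambda_n q t1 s1 n) (poly_eval (P n) n)) /\
    (forall n : nat, (n <= N)%nat -> d n <> RtoC 0) /\
    (forall m n : nat, (m <= N)%nat -> (n <= N)%nat ->
       qint_inv q a N (fun x => Cmult (RtoC (poly_eval (P n) n x * poly_eval (P m) m x)) (rho x))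
       = (if Nat.eqb m n then d n else RtoC 0)).
Proof.
  intros Hq Hs1 _ sigma1 tau sigma2 Hsigma2 Hs2 [Ha2 Ha1] [Ha1b2 Hb2b1] Lambda HLambda a b HN Hiota rho.
  assert (HLambda' : 1 + (1 - / q) * t1 / (s1 / 2) < 0).
  { unfold Lambda in HLambda. rewrite <- Rmult_assoc, Rinv_r, Rmult_1_l in HLambda by (apply pow_nonzero; lra).
    exact HLambda. }
  exact (qEHT_orthogonal_family q s1 a1 b1 t1 t0 s2 a2 b2 N iota
           Hq Hs1 Hs2 Hsigma2 Ha2 Ha1 Ha1b2 Hb2b1 HLambda' HN Hiota).
Qed.
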